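(* Assume $W>L$. For a generic signal $x\in\mathbb{C}^N$ and a generic window $w\in\mathbb{C}^W$, the pair $(x,w)$ is uniquely determined, modulo the scaling ambiguities described below, by a suitably chosen set of $N+W-L$ of the blind STFT measurements $\hat y_{x,w}[k,m]$. That is, there is a set $\Omega$ of $N+W-L$ index pairs $(k,m)$ such that for generic $(x,w)$, whenever $(x',w')\in\mathbb{C}^N\times\mathbb{C}^W$ satisfies $\hat y_{x',w'}[k,m]=\hat y_{x,w}[k,m]$ for all $(k,m)\in\Omega$, there exists $\lambda\in(\mathbb{C}^\times)^L$ with $(x',w')=\lambda\circ(x,w)$.
   Context: Let $N\ge W>L\ge 1$ be integers. Signals $x\in\mathbb{C}^N$ and windows $w\in\mathbb{C}^W$ are extended by zero outside $\{0,\ldots,N-1\}$, resp. $\{0,\ldots,W-1\}$. The blind STFT is $\hat y_{x,w}[k,m]=\sum_{n=0}^{N-1}x[n]w[mL-n]e^{-2\pi i kn/N}$ for integers $k$ and $m=0,\ldots,M-1$, $M=\lceil (N+W-1)/L\rceil$. For $\lambda=(\lambda_0,\ldots,\lambda_{L-1})\in(\mathbb{C}^\times)^L$, the scaling action is $\lambda\circ(x,w)=(x',w')$ with $x'[n]=\lambda_{n\bmod L}x[n]$ and $w'[n]=\lambda^{-1}_{(L-n)\bmod L}w[n]$. ''For generic $(x,w)$'' means: the set of pairs $(x,w)$ for which the conclusion fails is contained in the zero set of a nonzero polynomial in the real and imaginary parts of the entries of $x$ and $w$. *)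

(* The complex field is modelled by an arbitrary
   numClosedFieldType C (algebraically closed field with conjugation,
   real/imaginary parts). *)
From HB Require Import structures.
From mathcomp Require Import all_boot all_order all_algebra.
Set Implicit Arguments. Unset Strict Implicit. Unset Printing Implicit Defensive.
Import Order.TTheory GRing.Theory Num.Theory.
Local Open Scope ring_scope.

Section Defs.
Variable C : numClosedFieldType.

Definition zext (K : nat) (f : 'I_K -> C) (z : int) : C :=
  match z with
  | Posz n => oapp f 0 (insub n : option 'I_K)
  | Negz _ => 0
  end.

(* e^{-2 pi i / N} : N.-root (-1) = e^{i pi / N} (minimal argument root) *)
Definition omegaN (N : nat) : C := ((N.-root (-1 : C)) ^+ 2)^-1.

Definition Mdim (N W L : nat) : nat := (((N + W - 1) + (L - 1)) %/ L)%N.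

Definition stft (N W L : nat) (x : 'I_N -> C) (w : 'I_W -> C) (k m : nat) : C :=
  \sum_(n < N) x n * zext w ((m * L)%:Z - n%:Z) * omegaN N ^+ (k * n).

Definition lamAt (L : nat) (lam : 'I_L -> C) (j : nat) : C :=
  oapp lam 0 (insub (j %% L)%N : option 'I_L).

Definition scaled (N W L : nat) (lam : 'I_L -> C)
  (x : 'I_N -> C) (w : 'I_W -> C) (x' : 'I_N -> C) (w' : 'I_W -> C) : Prop :=
  (forall n : 'I_N, x' n = lamAt lam n * x n) /\
  (forall n : 'I_W, w' n = (lamAt lam ((L - n %% L) %% L)%N)^-1 * w n).

(* Multivariate polynomials over C in variables indexed by a finite type T,
   given as a list of terms (coefficient, exponent vector). *)
Definition mpoly (T : finType) := seq (C * {ffun T -> nat}).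

Definition mp_coef (T : finType) (P : mpoly T) (e : {ffun T -> nat}) : C :=
  \sum_(t <- P | t.2 == e) t.1.

Definition mp_nonzero (T : finType) (P : mpoly T) : Prop :=
  exists e, mp_coef P e != 0.

Definition mp_eval (T : finType) (P : mpoly T) (v : T -> C) : C :=
  \sum_(t <- P) t.1 * \prod_(i : T) v i ^+ t.2 i.

(* real variables: Re / Im of the entries of x and w *)
Definition genvar (N W : nat) : finType := (('I_N + 'I_W) * bool)%type.

Definition realcoords (N W : nat) (x : 'I_N -> C) (w : 'I_W -> C)
  (v : genvar N W) : C :=
  let z := match v.1 with inl i => x i | inr j => w j end in
  if v.2 then 'Re z else 'Im z.

End Defs.

From HB Require Import structures.
From mathcomp Require Import all_boot all_order all_algebra.
From mathcomp Require Import ring zify.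
Set Implicit Arguments. Unset Strict Implicit. Unset Printing Implicit Defensive.
Import Order.TTheory GRing.Theory Num.Theory.
Local Open Scope ring_scope.

(* Window [m] of the blind STFT is the DFT of the products [x n * w (m L - n)],
   and these products, for all [n + j] divisible by [L], determine [(x, w)] up to
   the scaling action.  They are recovered window by window: a product with
   [n >= L] and [m L - n >= L] follows from three products of earlier windows by
   a cross ratio (here the entries must be nonzero, the generic condition), so
   only the boundary products of each window are unknown.  There are [N + W - L]
   of them in all, and measuring as many frequencies of each window as it has
   boundary products yields an invertible Vandermonde system, since [omegaN N]
   is a primitive [N]-th root of unity. *)

Section UnitCircle.
Variable C : numClosedFieldType.
Implicit Types (q r z : C).

Lemma norm_eq1_of_expr_eqN1 n z : (0 < n)%N -> z ^+ n = -1 -> `|z| = 1.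
Proof.
move=> n_gt0 /(congr1 Num.norm); rewrite normrX normrN normr1 => /eqP.
by rewrite pexpr_eq1 // => /eqP.
Qed.

Lemma oner_neqN1 : (1 : C) != -1.
Proof. by rewrite -addr_eq0 gt_eqF ?addr_gt0 ?ltr01. Qed.

Lemma Re_1 : 'Re (1 : C) = 1. Proof. exact/Creal_ReP/rpred1. Qed.
Lemma Im_1 : 'Im (1 : C) = 0. Proof. exact/Creal_ImP/rpred1. Qed.

Lemma Re2_Im2_norm1 z : `|z| = 1 -> 'Re z ^+ 2 + 'Im z ^+ 2 = 1.
Proof. by move=> z1; rewrite -normC2_Re_Im z1 expr1n. Qed.

Lemma real_norm1_sqr z : z \is Num.real -> `|z| = 1 -> z ^+ 2 = 1.
Proof. by move=> zR z1; rewrite -[RHS](expr1n _ 2) -z1 normCK conj_Creal // expr2. Qed.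

Lemma Re_gtN1 z : `|z| = 1 -> z != -1 -> -1 < 'Re z.
Proof.
move=> z1 zN1; rewrite -subr_gt0 opprK.
have : 0 < `|z + 1| ^+ 2 by rewrite exprn_gt0 // normr_gt0 addr_eq0.
rewrite normC2_Re_Im !raddfD /= Re_1 Im_1.
have -> : ('Re z + 1) ^+ 2 + ('Im z + 0) ^+ 2 =
          ('Re z ^+ 2 + 'Im z ^+ 2) - 1 + ('Re z + 1) * 2%:R by ring.
by rewrite Re2_Im2_norm1 // subrr add0r pmulr_lgt0 ?ltr0n.
Qed.

(* On the unit circle, [q / r] below and [q r] above the real axis means that
   [q] lies strictly within the angle [arg r] of [1], hence to the right of [r]. *)
Lemma Re_lt_of_Im_sign q r : `|q| = 1 -> `|r| = 1 -> 0 < 'Im r ->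
  'Im (q / r) < 0 -> 0 < 'Im (q * r) -> 'Re r < 'Re q.
Proof.
move=> q1 r1 Imr_gt0.
rewrite invC_norm r1 expr1n invr1 mul1r !ImM Re_conj Im_conj.
have := Re2_Im2_norm1 q1; have := Re2_Im2_norm1 r1.
move: Imr_gt0; set a := 'Re q; set b := 'Im q; set c := 'Re r; set d := 'Im r.
move=> d_gt0 Er Eq below above.
have a_gt0 : 0 < a.
  have : 0 < a * d * 2%:R.
    have -> : a * d * 2%:R = (a * d + c * b) - (a * - d + c * b) by ring.
    by rewrite subr_gt0 (lt_trans below).
  by rewrite pmulr_lgt0 ?ltr0n // pmulr_lgt0.
have [c_le0|c_gt0] := real_leP (Creal_Re r) (real0 C); first exact: le_lt_trans c_le0 a_gt0.
have : 0 < (a * d - c * b) * (a * d + c * b).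
  rewrite mulr_gt0 // -oppr_lt0.
  by have -> : - (a * d - c * b) = a * - d + c * b by ring.
have -> : (a * d - c * b) * (a * d + c * b) = (a - c) * (a + c).
  have -> : (a * d - c * b) * (a * d + c * b) = a ^+ 2 * d ^+ 2 - c ^+ 2 * b ^+ 2 by ring.
  have -> : d ^+ 2 = 1 - c ^+ 2 by rewrite -Er; ring.
  have -> : b ^+ 2 = 1 - a ^+ 2 by rewrite -Eq; ring.
  ring.
by rewrite pmulr_lgt0 ?subr_gt0 // addr_gt0.
Qed.

End UnitCircle.

Lemma sum_eq0_has_neg (R : numDomainType) (f : nat -> R) j :
  (forall k, f k \is Num.real) -> (forall k, f k != 0) ->
  (0 < j)%N -> \sum_(k < j) f k = 0 -> exists2 k, (k < j)%N & f k < 0.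
Proof.
move=> f_real f_neq0 j_gt0 sum_f.
case: (pickP [pred k : 'I_j | f k < 0]) => [k fk_lt0|f_ge0]; first by exists k.
have {}f_ge0 (k : 'I_j) : true -> 0 <= f k.
  by move=> _; rewrite real_leNgt ?real0 ?f_real //; apply/negbT/f_ge0.
have /eqP := psumr_eq0P f_ge0 sum_f (i := Ordinal j_gt0) isT.
by rewrite (negbTE (f_neq0 _)).
Qed.

Section SignChange.
Variables (R : numDomainType) (f : nat -> R).
Hypotheses (f_real : forall k, f k \is Num.real) (f_neq0 : forall k, f k != 0).

Lemma exists_sign_change a d : f a < 0 -> 0 < f (a + d)%N ->
  exists k, f k < 0 < f k.+1.
Proof.
move=> fa_lt0; elim: d => [|d IHd]; first by rewrite addn0 => /(lt_trans fa_lt0); rewrite ltxx.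
rewrite addnS; case: (real_ltgtP (f_real (a + d)) (real0 R)) => [fad_lt0|fad_gt0|/eqP].
- by exists (a + d)%N; rewrite fad_lt0.
- by move=> _; apply: IHd.
- by rewrite (negbTE (f_neq0 _)).
Qed.

Lemma periodic_sign_change j : (0 < j)%N -> (forall k, f (k + j)%N = f k) ->
  \sum_(k < j) f k = 0 -> exists k, f k < 0 < f k.+1.
Proof.
move=> j_gt0 f_periodic sum_f.
have [a a_lt_j fa_lt0] := sum_eq0_has_neg f_real f_neq0 j_gt0 sum_f.
have [b _] : exists2 b, (b < j)%N & - f b < 0.
  apply: (@sum_eq0_has_neg _ (fun k => - f k)) => //.
  - by move=> k; rewrite rpredN.
  - by move=> k; rewrite oppr_eq0.
  - by rewrite sumrN sum_f oppr0.
have a_le_bj : (a <= b + j)%N by rewrite ltnW // ltn_addl.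
rewrite oppr_lt0 -f_periodic -(subnKC a_le_bj).
exact: exists_sign_change.
Qed.

End SignChange.

Section RootsOfMinusOne.
Variable C : numClosedFieldType.
Implicit Types (r y z : C).

Lemma exists_oddroot_N1 t : odd t -> (1 < t)%N ->
  exists v : C, [/\ v ^+ t = -1, v != 1 & v != -1].
Proof.
move=> t_odd t_gt1; pose p : {poly C} := \poly_(i < t) (-1) ^+ i.
have size_p : size p = t by rewrite size_poly_eq // signr_eq0.
have [v /rootP pv0] : exists v, root p v by apply/closed_rootP; rewrite size_p gtn_eqF.
have p_expand : p.[v] = \sum_(i < t) (- v) ^+ i.
  by rewrite horner_poly; apply: eq_bigr => i _; rewrite [RHS]exprNn.
have vt : v ^+ t = -1.
  have := subrX1 (- v) t; rewrite -p_expand pv0 mulr0 exprNn -signr_odd t_odd expr1 mulN1r.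
  by move/eqP; rewrite subr_eq0 eqr_oppLR => /eqP.
exists v; split => //.
  by apply: contra_eq_neq vt => ->; rewrite expr1n oner_neqN1.
move: pv0; rewrite p_expand; apply: contra_eq_neq => ->; rewrite opprK.
by rewrite (eq_bigr (fun=> 1)) => [|i _]; rewrite ?expr1n // sumr_const card_ord pnatr_eq0 -lt0n ltnW.
Qed.

Lemma real_norm1_eq r : r \is Num.real -> `|r| = 1 -> (r == 1) || (r == -1).
Proof. by move=> rR r1; rewrite -sqrf_eq1 real_norm1_sqr. Qed.

Lemma Im_gt0_of_expr_eqN1 r j : (0 < j)%N -> r ^+ j = -1 -> 0 <= 'Im r -> r != -1 ->
  0 < 'Im r.
Proof.
move=> j_gt0 rj Imr_ge0 r_neqN1; rewrite lt_def Imr_ge0 andbT.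
have r1 := norm_eq1_of_expr_eqN1 j_gt0 rj.
apply: contra_eq_neq rj => /Creal_ImP/real_norm1_eq/(_ r1)/orP[/eqP ->|/eqP r_eqN1].
  by rewrite expr1n oner_neqN1.
by move/eqP: r_neqN1.
Qed.

(* The points [z r^(2k)] are spaced by twice the argument of [r] along the
   circle, so one of them falls within that argument of [1]. *)
Lemma exists_orbit_Re_gt r z j : (0 < j)%N -> r ^+ j = -1 -> 0 < 'Im r -> `|z| = 1 ->
  (forall k, 'Im (z * (r ^+ 2) ^+ k / r) != 0) ->
  exists k, 'Re r < 'Re (z * (r ^+ 2) ^+ k).
Proof.
move=> j_gt0 rj Imr_gt0 z1 Im_neq0; set s := r ^+ 2.
have r1 := norm_eq1_of_expr_eqN1 j_gt0 rj.
have sj : s ^+ j = 1 by rewrite -exprM mulnC exprM rj sqrrN expr1n.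
have sum_s : \sum_(k < j) s ^+ k = 0.
  have s_neq1 : s != 1.
    apply: contraTneq Imr_gt0 => /eqP; rewrite sqrf_eq1 => /orP[] /eqP ->;
      by rewrite ?raddfN /= Im_1 ?oppr0 ltxx.
  apply/eqP; have := subrX1 s j; rewrite sj subrr => /esym/eqP.
  by rewrite mulf_eq0 subr_eq0 (negbTE s_neq1).
pose f k := 'Im (z * s ^+ k / r).
have sum_f : \sum_(k < j) f k = 0.
  have := congr1 (@Im C) (congr1 (fun u => z * u / r) sum_s).
  by rewrite /= mulr0 mul0r mulr_sumr mulr_suml !raddf_sum raddf0.
have [|||k /andP[fk_lt0 fk1_gt0]] := periodic_sign_change _ _ j_gt0 _ sum_f.
- by move=> k; apply: Creal_Im.
- exact: Im_neq0.
- by move=> k; rewrite /f exprD sj mulr1.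
exists k; apply: Re_lt_of_Im_sign => //.
  by rewrite normrM normrX normrX r1 z1 !expr1n mulr1.
by move: fk1_gt0; rewrite /f exprSr mulrA [s]expr2 mulrA mulrK // unitfE -normr_eq0 r1 oner_neq0.
Qed.

Lemma exists_rootN1_Re_gt r j t : (0 < j)%N -> r ^+ j = -1 -> 0 <= 'Im r ->
  odd t -> (1 < t)%N -> exists y, y ^+ (j * t) = -1 /\ 'Re r < 'Re y.
Proof.
move=> j_gt0 rj Imr_ge0 t_odd t_gt1.
have [v [vt v_neq1 v_neqN1]] := exists_oddroot_N1 t_odd t_gt1.
pose z := j.-root v; have zj : z ^+ j = v by rewrite rootCK.
have zjt : z ^+ (j * t) = -1 by rewrite exprM zj.
have z1 : `|z| = 1 by apply: norm_eq1_of_expr_eqN1 zjt; rewrite muln_gt0 j_gt0 ltnW.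
have Im_neq0 u : `|u| = 1 -> (u ^+ j) ^+ 2 = v ^+ 2 -> 'Im u != 0.
  move=> u1; apply: contra_eq_neq => /Creal_ImP uR.
  by rewrite -exprM mulnC exprM (real_norm1_sqr uR u1) expr1n eq_sym sqrf_eq1 negb_or v_neq1.
have [r_eqN1 | r_neqN1] := eqVneq r (-1).
  have Imz_neq0 : 'Im z != 0 by apply: Im_neq0; rewrite ?zj.
  exists z; split => //; rewrite r_eqN1 raddfN /= Re_1 Re_gtN1 //.
  by apply: contraNneq Imz_neq0 => ->; rewrite raddfN /= Im_1 oppr0.
have r1 := norm_eq1_of_expr_eqN1 j_gt0 rj.
have r2j : (r ^+ 2) ^+ j = 1 by rewrite exprAC rj sqrrN expr1n.
have [|k Re_lt] := exists_orbit_Re_gt j_gt0 rj (Im_gt0_of_expr_eqN1 j_gt0 rj Imr_ge0 r_neqN1) z1.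
  move=> k; apply: Im_neq0; first by rewrite !normrM normfV !normrX z1 r1 !expr1n invr1 !mulr1.
  suff -> : (z * (r ^+ 2) ^+ k / r) ^+ j = - v by rewrite sqrrN.
  rewrite [(_ / r) ^+ j]exprMn [(z * _) ^+ j]exprMn zj [_ ^+ k ^+ j]exprAC r2j expr1n.
  by rewrite mulr1 exprVn rj invrN1 mulrN1.
exists (z * (r ^+ 2) ^+ k); split => //.
by rewrite [(z * _) ^+ _]exprMn zjt [_ ^+ k ^+ _]exprAC exprM r2j !expr1n mulr1.
Qed.

End RootsOfMinusOne.

Section PrimitiveRoot.
Variables (C : numClosedFieldType) (N : nat).
Hypothesis N_gt0 : (0 < N)%N.
Let r := N.-root (-1 : C).
Let rN : r ^+ N = -1. Proof. exact: rootCK. Qed.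

Lemma Re_rootN1_max y : y ^+ N = -1 -> 'Re y <= 'Re r.
Proof.
move=> yN; have [Imy_ge0|Imy_lt0] := real_leP (real0 C) (Creal_Im y).
  exact: rootC_Re_max.
rewrite -Re_conj; apply: rootC_Re_max => //.
  by rewrite -rmorphXn yN rmorphN1.
by rewrite Im_conj oppr_ge0 ltW.
Qed.

(* The order [m] of [r] divides [2N] but not [N]; if it were smaller than [2N],
   [r] would be an [m/2]-th root of [-1] with [N/(m/2)] odd and greater than [1],
   and the roots of [-1] supplied by [exists_rootN1_Re_gt] contradict the
   maximality of ['Re r]. *)
Lemma prim_root_rootN1 : (N.*2).-primitive_root r.
Proof.
have r2N : r ^+ N.*2 = 1 by rewrite -mul2n mulnC exprM rN sqrrN expr1n.
have [m m_prim m_dvd] : {m | m.-primitive_root r & (m %| N.*2)%N}.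
  by apply: prim_order_exists r2N; rewrite double_gt0.
have m_ndvd_N : ~~ (m %| N)%N.
  by rewrite (prim_order_dvd m_prim) rN eq_sym oner_neqN1.
have m_even : ~~ odd m.
  by apply: contra m_ndvd_N; rewrite -coprimen2 => /Gauss_dvdr <-; rewrite mul2n.
set j := m./2; have m_eq : m = j.*2 by rewrite -[LHS]odd_double_half (negbTE m_even).
have j_gt0 : (0 < j)%N by rewrite -double_gt0 -m_eq (prim_order_gt0 m_prim).
have rj : r ^+ j = -1.
  have /eqP : (r ^+ j) ^+ 2 = 1 by rewrite -exprM muln2 -m_eq prim_expr_order.
  rewrite sqrf_eq1 -(prim_order_dvd m_prim) m_eq -muln2 => /orP[|/eqP //].
  by move=> /(dvdn_leq j_gt0); lia.
have j_dvd_N : (j %| N)%N by rewrite -(dvdn_pmul2l (isT : 0 < 2)%N) !mul2n -m_eq.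
set t := (N %/ j)%N; have N_eq : N = (j * t)%N by rewrite mulnC divnK.
have t_odd : odd t.
  by apply: contraR m_ndvd_N => t_even; rewrite m_eq N_eq -muln2 dvdn_pmul2l // dvdn2.
have [t_le1|t_gt1] := leqP t 1.
  have t_eq1 : t = 1%N by case: t t_le1 t_odd {N_eq} => [|[|]].
  by rewrite N_eq t_eq1 muln1 -m_eq.
have N_gt1 : (1 < N)%N by rewrite N_eq (leq_trans t_gt1) // leq_pmull.
have [y [yN Re_lt]] := exists_rootN1_Re_gt j_gt0 rj (Im_rootC_ge0 _ N_gt1) t_odd t_gt1.
by rewrite -N_eq in yN; have := Re_rootN1_max yN; rewrite lt_geF.
Qed.

End PrimitiveRoot.

Lemma omegaN_expr_inj (C : numClosedFieldType) N a b : (a < N)%N -> (b < N)%N ->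
  omegaN C N ^+ a = omegaN C N ^+ b -> a = b.
Proof.
move=> a_lt b_lt; have N_gt0 : (0 < N)%N by apply: leq_ltn_trans a_lt.
rewrite /omegaN !exprVn => /invr_inj; rewrite -!exprM => /eqP.
rewrite (eq_prim_root_expr (prim_root_rootN1 C N_gt0)) -mul2n -!muln_modr eqn_pmul2l //.
by rewrite !modn_small // => /eqP.
Qed.

(* Pairing the equations with the coefficients of the polynomial vanishing at
   [om ^+ n] for [n] in [S :\ n0] isolates [d n0]. *)
Lemma vandermonde_supported_eq0 (F : fieldType) N (S : {set 'I_N}) (om : F) (d : 'I_N -> F) :
  {in S &, injective (fun n : 'I_N => om ^+ n)} -> (forall n, n \notin S -> d n = 0) ->
  (forall k, (k < #|S|)%N -> \sum_(n < N) d n * om ^+ (k * n) = 0) ->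
  forall n, d n = 0.
Proof.
move=> om_inj d_supp d_eqs n0; have [n0S|] := boolP (n0 \in S); last exact: d_supp.
pose q := \prod_(z <- [seq om ^+ i | i : 'I_N <- enum (S :\ n0)]) ('X - z%:P).
have size_q : size q = #|S| by rewrite size_prod_XsubC size_map -cardE (cardsD1 n0 S) n0S.
have q_root n : n \in S -> root q (om ^+ n) = (n != n0).
  move=> nS; rewrite root_prod_XsubC; apply/mapP/idP => [[i]|n_neq0].
    by rewrite mem_enum !inE => /andP[i_neq0 iS] /(om_inj _ _ nS iS) ->.
  by exists n; rewrite // mem_enum !inE n_neq0.
have sum_eq : \sum_(n < N) d n * q.[om ^+ n] =
    \sum_(k < #|S|) q`_k * \sum_(n < N) d n * om ^+ (k * n).
  under [RHS]eq_bigr do rewrite mulr_sumr.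
  rewrite exchange_big /=; apply: eq_bigr => n _.
  rewrite (horner_coef_wide _ (eq_leq size_q)) mulr_sumr; apply: eq_bigr => k _.
  by rewrite mulrCA mulnC exprM.
rewrite [RHS]big1 in sum_eq; last by move=> k _; rewrite d_eqs ?mulr0.
move: sum_eq; rewrite (bigD1 n0) //= big1 ?addr0 => [/eqP|n n_neq0].
  by rewrite mulf_eq0 -/(root q _) q_root // eqxx orbF => /eqP.
have [nS|/d_supp->] := boolP (n \in S); last by rewrite mul0r.
by rewrite (rootP _) ?q_root ?mulr0.
Qed.

Lemma card_fibers_snd (I J : finType) (A : {set I * J}) :
  #|A| = (\sum_(j : J) #|[set i | (i, j) \in A]|)%N.
Proof.
rewrite -sum1_card big_mkcond /=.
transitivity (\sum_(i : I) \sum_(j : J) (if (i, j) \in A then 1 else 0))%N.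
  by rewrite pair_big /=; apply: eq_bigr => -[i j] _.
rewrite exchange_big /=; apply: eq_bigr => j _.
by rewrite -sum1_card [RHS]big_mkcond /=; apply: eq_bigr => i _; rewrite inE.
Qed.

Lemma card_ord_lt N c : (c <= N)%N -> #|[set k : 'I_N | (k < c)%N]| = c.
Proof.
move=> c_le_N; have widen_inj : injective (widen_ord c_le_N) by move=> i i' [] /val_inj.
rewrite -[RHS]card_ord -(card_imset _ widen_inj).
apply: eq_card => k; rewrite inE; apply/idP/imsetP => [k_lt_c|[i _ ->]]; last exact: (ltn_ord i).
by exists (Ordinal k_lt_c); last exact: val_inj.
Qed.

Section Measurements.
Variables N W L : nat.
Hypotheses (L_gt0 : (0 < L)%N) (L_lt_W : (L < W)%N) (W_le_N : (W <= N)%N).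
Let M := Mdim N W L.

Definition ceilL a := ((a + L - 1) %/ L)%N.

Lemma ceilLP a : (a <= ceilL a * L < a + L)%N.
Proof.
have := divn_eq (a + L - 1) L; have := ltn_pmod (a + L - 1) L_gt0.
rewrite -/(ceilL a); move: (ceilL a) ((a + L - 1) %% L)%N => q r; lia.
Qed.

Lemma Mdim_mulL_ge : (N + W - 1 <= M * L)%N.
Proof.
have -> : M = ceilL (N + W - 1) by rewrite /M /Mdim /ceilL; congr divn; lia.
by case/andP: (ceilLP (N + W - 1)).
Qed.

Lemma ceilL_lt_Mdim a : (a + L < N + W)%N -> (ceilL a < M)%N.
Proof.
by move=> a_lt; rewrite -(ltn_pmul2r L_gt0); have := ceilLP a; have := Mdim_mulL_ge; lia.
Qed.

Lemma ceilL_eq a m : (a <= m * L < a + L)%N -> ceilL a = m.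
Proof.
move=> /andP[a_le a_gt]; have /andP[c_ge c_lt] := ceilLP a.
have : (ceilL a < m.+1)%N by rewrite -(ltn_pmul2r L_gt0); lia.
have : (m < (ceilL a).+1)%N by rewrite -(ltn_pmul2r L_gt0); lia.
lia.
Qed.

Lemma window_pos_lt (j : 'I_W) : (ceilL j * L - j < N)%N.
Proof. by have := ceilLP j; lia. Qed.

Lemma ceilL_w_lt (j : 'I_W) : (ceilL j < M)%N.
Proof. by apply: ceilL_lt_Mdim; have := ltn_ord j; lia. Qed.

Lemma shiftL_lt (i : 'I_(N - L)) : (L + i < N)%N.
Proof. by have := ltn_ord i; lia. Qed.

Lemma ceilL_x_lt (i : 'I_(N - L)) : (ceilL (L + i) < M)%N.
Proof. by apply: ceilL_lt_Mdim; have := ltn_ord i; lia. Qed.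

(* Window [m] pairs [x n] with [w (m L - n)].  It is entered by the entries
   [w j] with [ceilL j = m], at [n = m L - j < L], and by the entries [x n],
   [n >= L], with [ceilL n = m], at [m L - n < L]; these are the products that
   cannot be recovered from earlier windows. *)
Definition boundary_entry (e : 'I_W + 'I_(N - L)) : 'I_N * 'I_M :=
  match e with
  | inl j => (Ordinal (window_pos_lt j), Ordinal (ceilL_w_lt j))
  | inr i => (Ordinal (shiftL_lt i), Ordinal (ceilL_x_lt i))
  end.

Lemma boundary_entry_inj : injective boundary_entry.
Proof.
case=> [j|i] [j'|i'] /= [n_eq m_eq].
  congr inl; apply: ord_inj; have := ceilLP j; have := ceilLP j'.
  by rewrite m_eq in n_eq *; lia.
- by exfalso; have := ceilLP j; lia.
- by exfalso; have := ceilLP j'; lia.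
- by congr inr; apply: ord_inj; lia.
Qed.

Definition boundary := [set boundary_entry e | e in [set: 'I_W + 'I_(N - L)]].
Definition boundary_at (m : 'I_M) := [set n : 'I_N | (n, m) \in boundary].
Definition measurements := [set km : 'I_N * 'I_M | (km.1 < #|boundary_at km.2|)%N].

Lemma card_measurements : #|measurements| = (N + W - L)%N.
Proof.
have -> : (N + W - L = #|boundary|)%N.
  by rewrite card_imset ?cardsT ?card_sum ?card_ord; [lia | exact: boundary_entry_inj].
rewrite !card_fibers_snd; apply: eq_bigr => m _.
rewrite -[RHS](@card_ord_lt N); last by rewrite -[X in (_ <= X)%N]card_ord max_card.
by apply: eq_card => k; rewrite !inE.
Qed.

Lemma mem_boundary_at (m : 'I_M) (n : 'I_N) :
  (n <= m * L < n + W)%N -> (n < L)%N || (m * L < n + L)%N -> n \in boundary_at m.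
Proof.
move=> /andP[n_le mL_lt] n_bdry; rewrite inE.
have [n_lt_L|n_ge_L] := ltnP n L.
  have j_lt : (m * L - n < W)%N by lia.
  have ceilL_j : ceilL (m * L - n) = m by apply: ceilL_eq; lia.
  apply/imsetP; exists (inl (Ordinal j_lt)); rewrite ?in_setT //.
  by congr pair; apply: ord_inj; rewrite /= ceilL_j; lia.
have i_lt : (n - L < N - L)%N by have := ltn_ord n; lia.
have ceilL_n : ceilL (L + (n - L)) = m by apply: ceilL_eq; move: n_bdry; lia.
apply/imsetP; exists (inr (Ordinal i_lt)); rewrite ?in_setT //.
by congr pair; apply: ord_inj; rewrite /= ?ceilL_n; lia.
Qed.

End Measurements.

Lemma zext_subn (C : numClosedFieldType) K (f : 'I_K -> C) a n (j : 'I_K) :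
  a = (n + j)%N -> zext f (a%:Z - n%:Z) = f j.
Proof. by move=> ->; rewrite PoszD addrAC subrr add0r /zext /= valK. Qed.

Lemma zext_subn_out (C : numClosedFieldType) K (f : 'I_K -> C) a n :
  ~~ (n <= a < n + K)%N -> zext f (a%:Z - n%:Z) = 0.
Proof.
have [n_le_a|a_lt_n] := leqP n a => /= [a_ge|_]; last first.
  suff -> : a%:Z - n%:Z = Negz (n - a).-1 by [].
  by rewrite NegzE prednK ?subn_gt0 // -subzn ?(ltnW a_lt_n) // opprB.
by rewrite subzn // /zext insubN //; lia.
Qed.

Lemma mul_eq_of_cross (F : fieldType) (u0 u1 v0 v1 u0' u1' v0' v1' : F) :
  u0' * v1' = u0 * v1 -> u1' * v0' = u1 * v0 -> u1' * v1' = u1 * v1 -> u1 * v1 != 0 ->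
  u0' * v0' = u0 * v0.
Proof.
move=> e01 e10 e11 nz; rewrite -e11 in nz; apply: (mulIf nz).
transitivity ((u0' * v1') * (u1' * v0')); first by ring.
by rewrite e01 e10 e11; ring.
Qed.

Section Recovery.
Variables (C : numClosedFieldType) (N W L : nat).
Hypotheses (L_gt0 : (0 < L)%N) (L_lt_W : (L < W)%N) (W_le_N : (W <= N)%N).
Let M := Mdim N W L.
Variables (x x' : 'I_N -> C) (w w' : 'I_W -> C).
Hypotheses (x_neq0 : forall n, x n != 0) (w_neq0 : forall j, w j != 0).
Hypothesis stft_eq : forall km, km \in measurements L_gt0 L_lt_W W_le_N ->
  stft L x' w' km.1 km.2 = stft L x w km.1 km.2.

Definition negmod n := ((L - n %% L) %% L)%N.

Lemma negmod_lt n : (negmod n < L)%N. Proof. exact: ltn_pmod. Qed.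

Lemma dvdn_negmod_add n : (L %| negmod n + n)%N.
Proof.
have n_mod_le : (n %% L <= L)%N := ltnW (ltn_pmod n L_gt0).
by rewrite /dvdn /negmod modnDml -modnDmr (subnK n_mod_le) modnn.
Qed.

Definition window_diff m (n : 'I_N) : C :=
  x' n * zext w' ((m * L)%N%:Z - n%:Z) - x n * zext w ((m * L)%N%:Z - n%:Z).

Lemma window_diff_fourier (k : 'I_N) (m : 'I_M) :
  (k, m) \in measurements L_gt0 L_lt_W W_le_N ->
  \sum_(n < N) window_diff m n * omegaN C N ^+ (k * n) = 0.
Proof.
move=> /stft_eq; rewrite /stft /= => stft_km.
by under eq_bigr do rewrite mulrBl; rewrite sumrB stft_km subrr.
Qed.

(* A product [x n * w j] with [n, j >= L] follows by a cross ratio from the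
   products pairing [n] and [j] with the residues [negmod j] and [negmod n],
   which lie in earlier windows. *)
Lemma window_diff_outside (m : 'I_M) :
  (forall (n : 'I_N) (j : 'I_W), (n + j < m * L)%N -> (L %| n + j)%N ->
     x' n * w' j = x n * w j) ->
  forall n, n \notin boundary_at L_gt0 L_lt_W W_le_N m -> window_diff m n = 0.
Proof.
move=> IH n n_out; rewrite /window_diff.
have [/andP[n_le n_lt]|n_out_win] := boolP (n <= m * L < n + W)%N; last first.
  by rewrite !zext_subn_out // !mulr0 subrr.
have j_lt : (m * L - n < W)%N by lia.
set j := Ordinal j_lt; have mL_eq : (m * L = n + j)%N by rewrite /= subnKC.
rewrite !(zext_subn _ mL_eq); apply/eqP; rewrite subr_eq0; apply/eqP.
have /norP[n_ge_L j_ge_L] : ~~ ((n < L) || (m * L < n + L))%N.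
  by apply: contra n_out; apply: mem_boundary_at; rewrite n_le.
have n1_lt : (negmod j < N)%N by have := negmod_lt j; lia.
have j1_lt : (negmod n < W)%N by have := negmod_lt n; lia.
apply: (@mul_eq_of_cross _ _ (x (Ordinal n1_lt)) _ (w (Ordinal j1_lt))
                            _ (x' (Ordinal n1_lt)) _ (w' (Ordinal j1_lt))).
- by apply: IH => /=; [have := negmod_lt n; lia | rewrite addnC dvdn_negmod_add].
- by apply: IH => /=; [have := negmod_lt (m * L - n); lia | exact: dvdn_negmod_add].
- apply: IH => /=; first by have := negmod_lt n; have := negmod_lt (m * L - n); lia.
  rewrite -(dvdn_addl _ (dvdn_mull m (dvdnn L))).
  have -> : (negmod (m * L - n) + negmod n + m * L =
             (negmod (m * L - n) + (m * L - n)) + (negmod n + n))%N by lia.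
  by rewrite dvdn_add ?dvdn_negmod_add.
- by rewrite mulf_neq0.
Qed.

(* The products of earlier windows cut the unknowns of window [s / L] down to
   its boundary, where the measured frequencies form an invertible Vandermonde
   system. *)
Lemma products_eq_window s (n : 'I_N) (j : 'I_W) : (n + j)%N = s -> (L %| s)%N ->
  x' n * w' j = x n * w j.
Proof.
elim/ltn_ind: s n j => s IH n j nj_eq L_dvd_s.
have m_lt : (s %/ L < M)%N.
  by rewrite ltn_divLR //; have := Mdim_mulL_ge L_gt0 L_lt_W W_le_N; have := ltn_ord n;
     have := ltn_ord j; lia.
set m := Ordinal m_lt; have mL_eq : (m * L = n + j)%N by rewrite /= divnK.
have diff0 : forall n0, window_diff m n0 = 0.
  apply: (vandermonde_supported_eq0 (S := boundary_at L_gt0 L_lt_W W_le_N m)).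
  - by move=> a b _ _ /(omegaN_expr_inj (ltn_ord a) (ltn_ord b)) /ord_inj.
  - apply: window_diff_outside => n' j' lt_mL; apply: IH; last by [].
    by rewrite -nj_eq -mL_eq.
  - move=> k k_lt; have k_lt_N : (k < N)%N.
      by apply: leq_trans k_lt _; rewrite -[X in (_ <= X)%N]card_ord max_card.
    by apply: (@window_diff_fourier (Ordinal k_lt_N)); rewrite inE.
by have /eqP := diff0 n; rewrite /window_diff !(zext_subn _ mL_eq) subr_eq0 => /eqP.
Qed.

Lemma products_eq (n : 'I_N) (j : 'I_W) : (L %| n + j)%N -> x' n * w' j = x n * w j.
Proof. exact: products_eq_window. Qed.

Lemma products_neq0 (n : 'I_N) (j : 'I_W) : (L %| n + j)%N -> x' n != 0 /\ w' j != 0.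
Proof.
move=> /products_eq nj_eq; have : x' n * w' j != 0 by rewrite nj_eq mulf_neq0.
by rewrite mulf_eq0 negb_or => /andP.
Qed.

Lemma lamAt_ord (lam : 'I_L -> C) k : lamAt lam k = lam (Ordinal (ltn_pmod k L_gt0)).
Proof. by rewrite /lamAt (insubT (fun i => i < L)%N (ltn_pmod k L_gt0)). Qed.

Lemma exists_scaling : exists lam : 'I_L -> C, (forall i, lam i != 0) /\ scaled lam x w x' w'.
Proof.
have L_le_N : (L <= N)%N by rewrite ltnW // (leq_trans L_lt_W).
pose xL a := widen_ord L_le_N a.
have negmod_ltW k : (negmod k < W)%N by rewrite (ltn_trans (negmod_lt k)).
have dvd_xL (a : 'I_L) : (L %| xL a + Ordinal (negmod_ltW a))%N.
  by rewrite addnC dvdn_negmod_add.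
exists (fun a => x' (xL a) / x (xL a)); split => [a|].
  by rewrite mulf_neq0 ?invr_neq0 //; case: (products_neq0 (dvd_xL a)).
split=> n; rewrite lamAt_ord; set a := Ordinal _.
  set j := Ordinal (negmod_ltW n).
  have dvd_n : (L %| n + j)%N by rewrite addnC dvdn_negmod_add.
  have dvd_a : (L %| xL a + j)%N.
    by rewrite /dvdn modnDml -/(dvdn L (n + negmod n)) addnC dvdn_negmod_add.
  have [_ w'j_neq0] := products_neq0 dvd_a.
  apply: (mulIf w'j_neq0); rewrite products_eq //.
  have -> : x' (xL a) / x (xL a) * x n * w' j = x n * (x' (xL a) * w' j) / x (xL a) by ring.
  by rewrite products_eq //; field.
have dvd_an : (L %| xL a + n)%N.
  by rewrite /dvdn modnDml -/(dvdn L (negmod n + n)) dvdn_negmod_add.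
have [x'a_neq0 _] := products_neq0 dvd_an.
by apply: (mulfI x'a_neq0); rewrite products_eq //; field; rewrite x_neq0.
Qed.

End Recovery.

Section Genericity.
Variables (C : numClosedFieldType) (N W : nat).

Definition Re_exponent : {ffun genvar N W -> nat} := [ffun v => nat_of_bool v.2].

(* [realcoords] reads the variable [(e, true)] as ['Re e], so this is the product
   of the real parts of all entries of [x] and [w]. *)
Definition Re_monomial : mpoly C (genvar N W) := [:: (1, Re_exponent)].

Lemma Re_monomial_neq0 : mp_nonzero Re_monomial.
Proof. by exists Re_exponent; rewrite /mp_coef big_cons big_nil eqxx addr0 oner_neq0. Qed.

Lemma Re_monomial_entries_neq0 (x : 'I_N -> C) (w : 'I_W -> C) :
  mp_eval Re_monomial (realcoords x w) != 0 -> (forall n, x n != 0) /\ (forall j, w j != 0).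
Proof.
rewrite /mp_eval big_cons big_nil addr0 mul1r => /prodf_neq0 Re_neq0.
split=> [n|j]; [have := Re_neq0 (inl n, true) isT | have := Re_neq0 (inr j, true) isT];
  by rewrite ffunE /realcoords /= expr1; apply: contraNneq => ->; rewrite raddf0.
Qed.

End Genericity.

Theorem theorem1 (C : numClosedFieldType) (N W L : nat)
  (hL : (1 <= L)%N) (hLW : (L < W)%N) (hWN : (W <= N)%N) :
  exists Om : {set 'I_N * 'I_(Mdim N W L)},
    #|Om| = (N + W - L)%N /\
    exists P : mpoly C (genvar N W),
      mp_nonzero P /\
      forall (x : 'I_N -> C) (w : 'I_W -> C),
        mp_eval P (realcoords x w) != 0 ->
        forall (x' : 'I_N -> C) (w' : 'I_W -> C),
          (forall km, km \in Om ->
             stft L x' w' km.1 km.2 = stft L x w km.1 km.2) ->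
          exists lam : 'I_L -> C, (forall i, lam i != 0) /\ scaled lam x w x' w'.
Proof.
exists (measurements hL hLW hWN); split; first exact: card_measurements.
exists (Re_monomial C N W); split; first exact: Re_monomial_neq0.
move=> x w /Re_monomial_entries_neq0[x_neq0 w_neq0] x' w' stft_eq.
exact: exists_scaling x_neq0 w_neq0 stft_eq.
Qed.
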